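(* With $\beta=\frac1k-\frac\theta{2k}$, the lattices $\varphi_\beta(\mathcal{O}_\mathbb{L})$ (rotated $\mathbb{Z}^k$) and $\varphi_\beta(L')$ (rotated $D_k$) have maximum diversity, and $d_{p,\min}(\varphi_\beta(\mathcal{O}_\mathbb{L}))=2^{(1-(m-1)k)/2}$, $d_{p,\min}(\varphi_\beta(L'))=2^{(3-(m-1)k)/2}$.
   Context: Let $m\ge3$, $k=2^{m-2}$, $\omega=e^{2\pi i/2^m}$, $\theta_j=\omega^j+\omega^{-j}$, $\theta=\theta_1$, $\mathbb{L}=\mathbb{Q}(\theta)$ (totally real, degree $k$, $\mathcal{O}_\mathbb{L}=\mathbb{Z}[\theta]$). Let $L'$ be the $\mathbb{Z}$-module generated by $2+\theta_1,\theta_1,\theta_2,\dots,\theta_{k-1}$. Let $\tau$ be a generator of $\mathrm{Gal}(\mathbb{L}/\mathbb{Q})$; for totally positive $\beta\in\mathbb{L}$, $\varphi_\beta(y)=(\sqrt{\tau^j(\beta)}\tau^j(y))_{j=0}^{k-1}$. A lattice has maximum diversity if each nonzero vector has all coordinates nonzero; then $d_{p,\min}(\Lambda)=\inf\{|y_1\cdots y_k|:0\ne y\in\Lambda\}$. *)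

From Stdlib Require Import Reals ZArith Lia Lra.
Open Scope R_scope.

Fixpoint sumR (n : nat) (f : nat -> R) : R :=
  match n with O => 0 | S n' => sumR n' f + f n' end.
Fixpoint prodR (n : nat) (f : nat -> R) : R :=
  match n with O => 1 | S n' => prodR n' f * f n' end.

Definition kk (m : nat) : nat := Nat.pow 2 (m - 2).

(* g (odd) determines the generator tau of Gal(L/Q) via tau(theta) = theta_g,
   i.e. omega |-> omega^g.  tau generates iff the classes +-g^j (j<k) are
   pairwise distinct modulo 2^m. *)
Definition is_gen (m g : nat) : Prop :=
  Z.odd (Z.of_nat g) = true /\
  forall i j : nat, (i < kk m)%nat -> (j < kk m)%nat ->
    ((Z.of_nat g ^ Z.of_nat i - Z.of_nat g ^ Z.of_nat j) mod (2 ^ Z.of_nat m) = 0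
     \/ (Z.of_nat g ^ Z.of_nat i + Z.of_nat g ^ Z.of_nat j) mod (2 ^ Z.of_nat m) = 0)%Z ->
    i = j.

(* tau^j(theta_i) = omega^(i g^j) + omega^(-i g^j) = 2 cos(2 pi i g^j / 2^m),
   with L embedded in R by theta = 2 cos(2 pi / 2^m). *)
Definition tau_theta_i (m g j i : nat) : R :=
  2 * cos (2 * PI * INR (i * Nat.pow g j) / 2 ^ m).

Definition tau_beta (m g j : nat) : R :=
  1 / INR (kk m) - tau_theta_i m g j 1 / (2 * INR (kk m)).

(* element y_c = sum_{i<k} c_i theta^i of O_L = Z[theta]; tau^j(y_c) *)
Definition tau_OL (m g : nat) (c : nat -> Z) (j : nat) : R :=
  sumR (kk m) (fun i => IZR (c i) * (tau_theta_i m g j 1) ^ i).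

(* element c_0 (2+theta_1) + sum_{1<=i<k} c_i theta_i of L'; tau^j of it *)
Definition tau_Lp (m g : nat) (c : nat -> Z) (j : nat) : R :=
  IZR (c O) * (2 + tau_theta_i m g j 1)
  + sumR (kk m) (fun i => if Nat.eqb i 0 then 0 else IZR (c i) * tau_theta_i m g j i).

Definition phi_beta (m g : nat) (tauy : nat -> R) (j : nat) : R :=
  sqrt (tau_beta m g j) * tauy j.

Definition lattice_OL (m g : nat) (v : nat -> R) : Prop :=
  exists c : nat -> Z, forall j, (j < kk m)%nat -> v j = phi_beta m g (tau_OL m g c) j.
Definition lattice_Lp (m g : nat) (v : nat -> R) : Prop :=
  exists c : nat -> Z, forall j, (j < kk m)%nat -> v j = phi_beta m g (tau_Lp m g c) j.

Definition nonzero_vec (n : nat) (v : nat -> R) : Prop :=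
  exists j, (j < n)%nat /\ v j <> 0.

Definition max_diversity (n : nat) (Lam : (nat -> R) -> Prop) : Prop :=
  forall v, Lam v -> nonzero_vec n v -> forall j, (j < n)%nat -> v j <> 0.

Definition is_inf (S : R -> Prop) (x : R) : Prop :=
  (forall y, S y -> x <= y) /\ (forall z, (forall y, S y -> z <= y) -> z <= x).

Definition dpmin_is (n : nat) (Lam : (nat -> R) -> Prop) (x : R) : Prop :=
  is_inf (fun r => exists v, Lam v /\ nonzero_vec n v /\ r = Rabs (prodR n v)) x.

From Stdlib Require Import Reals ZArith Lia Lra List Permutation.
Open Scope R_scope.
Import ListNotations.

(* Write theta = 2 cos (2 pi / 2^m) and k = 2^(m-2).  The conjugates tau^j(theta),
   j < k, are exactly the numbers reached from 0 by m - 2 steps w |-> +-sqrt (w + 2),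
   so for y = f(theta) with f an integer polynomial the product of the coordinates of
   phi_beta(y) is sqrt N(beta) * N(y), N being the product over the conjugates.
   Peeling off one square root at a time shows that N(y) is an integer, even when
   f(0) is even (as for every element of L'), and that N(2 - theta) = N(2 + theta) = 2,
   whence N(beta) = 2^(1 - (m-1) k).  An integer polynomial vanishing at one conjugate
   vanishes at all of them, since otherwise sqrt 2 would be rational; this gives
   maximum diversity and N(y) <> 0 for y <> 0.  The bounds |N(y)| >= 1 on O_L and
   |N(y)| >= 2 on L' are attained at y = 1 and y = 2 + theta. *)


Inductive int_poly : (R -> R) -> Prop :=
| int_poly_const (z : Z) : int_poly (fun _ => IZR z)
| int_poly_id : int_poly (fun x => x)
| int_poly_add f h : int_poly f -> int_poly h -> int_poly (fun x => f x + h x)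
| int_poly_mul f h : int_poly f -> int_poly h -> int_poly (fun x => f x * h x)
| int_poly_ext f h : int_poly f -> (forall x, f x = h x) -> int_poly h.

Lemma int_poly_sub f h : int_poly f -> int_poly h -> int_poly (fun x => f x - h x).
Proof.
  intros Hf Hh. apply int_poly_ext with (fun x => f x + IZR (-1) * h x).
  - repeat constructor; assumption.
  - intros x; simpl; ring.
Qed.

Lemma int_poly_pow i : int_poly (fun x => x ^ i).
Proof.
  induction i as [|i IH]; simpl.
  - exact (int_poly_const 1).
  - apply int_poly_mul; [constructor | exact IH].
Qed.

Lemma int_poly_sum k (h : nat -> R -> R) :
  (forall i, int_poly (h i)) -> int_poly (fun x => sumR k (fun i => h i x)).
Proof.
  intros H; induction k as [|k IH]; simpl.
  - exact (int_poly_const 0).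
  - apply int_poly_add; auto.
Qed.

Lemma int_poly_congr f : int_poly f -> forall u v : Z, exists a b d,
  f (IZR u) = IZR a /\ f (IZR v) = IZR b /\ (a - b = d * (u - v))%Z.
Proof.
  induction 1 as [z| |f h _ IHf _ IHh|f h _ IHf _ IHh|f h _ IHf Efh]; intros u v.
  - exists z, z, 0%Z. repeat split; ring.
  - exists u, v, 1%Z. repeat split; ring.
  - destruct (IHf u v) as (a1 & b1 & d1 & -> & -> & D1).
    destruct (IHh u v) as (a2 & b2 & d2 & -> & -> & D2).
    exists (a1 + a2)%Z, (b1 + b2)%Z, (d1 + d2)%Z. rewrite !plus_IZR. repeat split; lia.
  - destruct (IHf u v) as (a1 & b1 & d1 & -> & -> & D1).
    destruct (IHh u v) as (a2 & b2 & d2 & -> & -> & D2).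
    exists (a1 * a2)%Z, (b1 * b2)%Z, (a1 * d2 + b2 * d1)%Z. rewrite !mult_IZR.
    repeat split; nia.
  - rewrite <- !Efh. apply IHf.
Qed.

Lemma int_poly_at_int f (u : Z) : int_poly f -> exists a, f (IZR u) = IZR a.
Proof. intros Hf. destruct (int_poly_congr f Hf u u) as (a & _ & _ & E & _). eauto. Qed.

(* Even and odd parts, written in the variable [x^2 - 2] so that one level of
   the tower [w = x^2 - 2] is peeled off. *)
Lemma int_poly_split f : int_poly f -> exists a b, int_poly a /\ int_poly b /\
  forall x, f x = a (x * x - 2) + x * b (x * x - 2).
Proof.
  induction 1 as [z| |f h _ IHf _ IHh|f h _ IHf _ IHh|f h _ IHf Efh].
  - exists (fun _ => IZR z), (fun _ => IZR 0). repeat split; try constructor.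
    intros; simpl; ring.
  - exists (fun _ => IZR 0), (fun _ => IZR 1). repeat split; try constructor.
    intros; simpl; ring.
  - destruct IHf as (a1 & b1 & A1 & B1 & E1). destruct IHh as (a2 & b2 & A2 & B2 & E2).
    exists (fun s => a1 s + a2 s), (fun s => b1 s + b2 s).
    repeat split; try (constructor; assumption). intros; rewrite E1, E2; ring.
  - destruct IHf as (a1 & b1 & A1 & B1 & E1). destruct IHh as (a2 & b2 & A2 & B2 & E2).
    exists (fun s => a1 s * a2 s + (s + IZR 2) * (b1 s * b2 s)),
           (fun s => a1 s * b2 s + b1 s * a2 s).
    repeat split; try (repeat constructor; assumption).
    intros; rewrite E1, E2; simpl; ring.
  - destruct IHf as (a & b & A & B & E). exists a, b. repeat split; auto.
    intros; rewrite <- Efh; auto.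
Qed.

(* [cheb i] is the polynomial with [cheb i (2 cos t) = 2 cos (i t)], so that
   [theta_i = cheb i theta]. *)
Fixpoint cheb (i : nat) (x : R) : R :=
  match i with
  | O => 2
  | S O => x
  | S (S i' as j) => x * cheb j x - cheb i' x
  end.

Lemma nat_ind2 (P : nat -> Prop) :
  P 0%nat -> P 1%nat -> (forall i, P i -> P (S i) -> P (S (S i))) -> forall i, P i.
Proof.
  intros H0 H1 HS i. enough (P i /\ P (S i)) by tauto.
  induction i as [|i IH]; [tauto|]. split; [tauto|]. apply HS; tauto.
Qed.

Lemma cheb_cos i t : cheb i (2 * cos t) = 2 * cos (INR i * t).
Proof.
  induction i as [| |i IH0 IH1] using nat_ind2.
  - simpl. rewrite Rmult_0_l, cos_0. ring.
  - simpl. rewrite Rmult_1_l. reflexivity.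
  - change (cheb (S (S i)) (2 * cos t))
      with (2 * cos t * cheb (S i) (2 * cos t) - cheb i (2 * cos t)).
    rewrite IH0, IH1.
    replace (INR (S (S i)) * t) with (INR (S i) * t + t) by (rewrite (S_INR (S i)); ring).
    replace (INR i * t) with (INR (S i) * t - t) by (rewrite (S_INR i); ring).
    rewrite cos_plus, cos_minus. ring.
Qed.

Lemma int_poly_cheb i : int_poly (cheb i).
Proof.
  induction i as [| |i IH0 IH1] using nat_ind2.
  - exact (int_poly_const 2).
  - exact int_poly_id.
  - apply int_poly_sub; [apply int_poly_mul; [constructor|]|]; assumption.
Qed.

Lemma cheb_even_at_0 i : exists z, cheb i 0 = IZR (2 * z).
Proof.
  induction i as [| |i [z Hz] _] using nat_ind2.
  - exists 1%Z. reflexivity.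
  - exists 0%Z. reflexivity.
  - exists (- z)%Z. change (cheb (S (S i)) 0) with (0 * cheb (S i) 0 - cheb i 0).
    rewrite Hz, !mult_IZR, opp_IZR. ring.
Qed.

(* The [2^n] conjugates of [2 cos (2 pi / 2^(n+2))]: iterate [w |-> +-sqrt (w + 2)]
   starting from [0 = 2 cos (pi / 2)]. *)
Fixpoint conjugates (n : nat) : list R :=
  match n with
  | O => [0]
  | S n' => flat_map (fun w => [sqrt (w + 2); - sqrt (w + 2)]) (conjugates n')
  end.

Definition lprod (l : list R) (f : R -> R) : R := fold_right (fun w acc => f w * acc) 1 l.

Lemma lprod_app l1 l2 f : lprod (l1 ++ l2) f = lprod l1 f * lprod l2 f.
Proof. induction l1 as [|w l1 IH]; simpl; [ring | rewrite IH; ring]. Qed.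

Lemma lprod_ext l f h : (forall w, In w l -> f w = h w) -> lprod l f = lprod l h.
Proof. induction l as [|w l IH]; simpl; intros H; auto. rewrite H, IH; auto. Qed.

Lemma lprod_mul l f h : lprod l (fun w => f w * h w) = lprod l f * lprod l h.
Proof. induction l as [|w l IH]; simpl; [ring | rewrite IH; ring]. Qed.

Lemma lprod_neq0 l f : (forall w, In w l -> f w <> 0) -> lprod l f <> 0.
Proof.
  induction l as [|w l IH]; simpl; intros H; [lra|].
  apply Rmult_integral_contrapositive; split; auto.
Qed.

Lemma lprod_perm l l' f : Permutation l l' -> lprod l f = lprod l' f.
Proof. induction 1; simpl; try ring; congruence. Qed.

Lemma conjugates_range n w : In w (conjugates n) -> -2 < w < 2.
Proof.
  revert w; induction n as [|n IH]; simpl; intros w H.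
  - destruct H as [<-|[]]; lra.
  - apply in_flat_map in H. destruct H as (u & Hu & H). apply IH in Hu.
    assert (0 < sqrt (u + 2)) by (apply sqrt_lt_R0; lra).
    assert (sqrt (u + 2) * sqrt (u + 2) = u + 2) by (apply sqrt_sqrt; lra).
    assert (sqrt (u + 2) < 2) by nra.
    simpl in H; destruct H as [<-|[<-|[]]]; lra.
Qed.

Lemma conjugates_length n : length (conjugates n) = (2 ^ n)%nat.
Proof.
  induction n as [|n IH]; simpl; auto. rewrite <- IH. clear IH.
  induction (conjugates n) as [|w l IH]; simpl; auto. rewrite IH. lia.
Qed.

Lemma lprod_conjugates_succ n f : lprod (conjugates (S n)) f =
  lprod (conjugates n) (fun w => f (sqrt (w + 2)) * f (- sqrt (w + 2))).
Proof. simpl. induction (conjugates n) as [|w l IH]; simpl; auto. rewrite IH. ring. Qed.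

(* The norm of [a w + sqrt (w + 2) b w] down to the field of [w]. *)
Definition rel_norm (a b : R -> R) (w : R) : R := a w * a w - (w + 2) * (b w * b w).

Lemma int_poly_rel_norm a b : int_poly a -> int_poly b -> int_poly (rel_norm a b).
Proof.
  intros A B. unfold rel_norm.
  apply int_poly_sub; repeat apply int_poly_mul; auto.
  apply int_poly_add; [exact int_poly_id | exact (int_poly_const 2)].
Qed.

Lemma lprod_conjugates_split n a b :
  lprod (conjugates (S n)) (fun x => a (x * x - 2) + x * b (x * x - 2)) =
  lprod (conjugates n) (rel_norm a b).
Proof.
  rewrite lprod_conjugates_succ. apply lprod_ext. intros w Hw.
  apply conjugates_range in Hw.
  assert (Hs : sqrt (w + 2) * sqrt (w + 2) = w + 2) by (apply sqrt_sqrt; lra).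
  replace (- sqrt (w + 2) * - sqrt (w + 2) - 2) with w by lra.
  replace (sqrt (w + 2) * sqrt (w + 2) - 2) with w by lra.
  unfold rel_norm. set (s := sqrt (w + 2)) in *. rewrite <- Hs. ring.
Qed.

Lemma norm_int_poly n f : int_poly f -> exists N, lprod (conjugates n) f = IZR N.
Proof.
  revert f; induction n as [|n IH]; intros f Hf.
  - destruct (int_poly_at_int f 0 Hf) as [z Hz]. exists z. simpl. rewrite Hz. ring.
  - destruct (int_poly_split f Hf) as (a & b & A & B & E).
    rewrite (lprod_ext _ _ _ (fun w _ => E w)), lprod_conjugates_split.
    exact (IH _ (int_poly_rel_norm a b A B)).
Qed.

(* [f 0 = a (-2) = a 0 (mod 2)], hence [rel_norm a b 0 = a 0 ^ 2 - 2 b 0 ^ 2] is even. *)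
Lemma norm_int_poly_even n f z : int_poly f -> f 0 = IZR (2 * z) ->
  exists N, lprod (conjugates n) f = IZR (2 * N).
Proof.
  revert f z; induction n as [|n IH]; intros f z Hf Hz.
  - exists z. cbn [conjugates lprod fold_right]. rewrite Hz. ring.
  - destruct (int_poly_split f Hf) as (a & b & A & B & E).
    rewrite (lprod_ext _ _ _ (fun w _ => E w)), lprod_conjugates_split.
    destruct (int_poly_congr a A 0 (-2)) as (a0 & a2 & d & Ha0 & Ha2 & D).
    destruct (int_poly_at_int b 0 B) as (b0 & Hb0).
    assert (a2 = 2 * z)%Z as ->.
    { apply eq_IZR. rewrite <- Ha2, <- Hz, E.
      replace (0 * 0 - 2) with (IZR (-2)) by (simpl; ring). ring. }
    apply (IH _ (2 * (d * d) + 4 * d * z + 2 * z * z - b0 * b0)%Z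
             (int_poly_rel_norm a b A B)).
    unfold rel_norm. rewrite Ha0, Hb0.
    replace a0 with (2 * z + d * 2)%Z by lia.
    rewrite !mult_IZR, !minus_IZR, !plus_IZR, !mult_IZR. simpl. ring.
Qed.

Lemma norm_two_minus_two_plus n :
  lprod (conjugates n) (fun x => 2 - x) = 2 /\ lprod (conjugates n) (fun x => 2 + x) = 2.
Proof.
  induction n as [|n [IH _]].
  - simpl. split; ring.
  - rewrite !lprod_conjugates_succ.
    split; (transitivity (lprod (conjugates n) (fun x => 2 - x)); [|exact IH]); apply lprod_ext; intros w Hw; apply conjugates_range in Hw;
      assert (sqrt (w + 2) * sqrt (w + 2) = w + 2) by (apply sqrt_sqrt; lra); nra.
Qed.

Lemma Z_sqr_eq_twice_sqr a b : (a * a = 2 * (b * b))%Z -> b = 0%Z.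
Proof.
  remember (Z.abs_nat b) as k eqn:Hk. revert a b Hk.
  induction k as [k IH] using lt_wf_ind; intros a b Hk H.
  assert (even_of_even_sqr : forall x, Z.even (x * x) = true -> exists y, x = (2 * y)%Z).
  { intros x Hx. rewrite Z.even_mul, Bool.orb_diag in Hx. apply Z.even_spec, Hx. }
  destruct (even_of_even_sqr a) as [c ->]. { rewrite H, Z.even_mul. reflexivity. }
  destruct (even_of_even_sqr b) as [d ->].
  { replace (b * b)%Z with (2 * (c * c))%Z by nia. rewrite Z.even_mul. reflexivity. }
  destruct (Z.eq_dec d 0) as [-> | Hd]; [reflexivity|].
  exfalso. apply Hd, (IH (Z.abs_nat d) ltac:(lia) c d eq_refl). nia.
Qed.

(* When [b] does not vanish, [rel_norm a b] vanishes on all conjugates, giving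
   [N(a)^2 = N(2 + w) N(b)^2 = 2 N(b)^2] with [N(b) <> 0]: sqrt 2 would be rational. *)
Lemma int_poly_vanish_conjugates n f : int_poly f ->
  forall z, In z (conjugates n) -> f z = 0 -> forall w, In w (conjugates n) -> f w = 0.
Proof.
  revert f; induction n as [|n IH]; intros f Hf z Hz Hfz w Hw.
  - simpl in Hz, Hw. destruct Hz as [<-|[]]; destruct Hw as [<-|[]]; exact Hfz.
  - destruct (int_poly_split f Hf) as (a & b & A & B & E).
    simpl in Hz, Hw. apply in_flat_map in Hz, Hw.
    destruct Hz as (u & Hu & Hz). destruct Hw as (u' & Hu' & Hw).
    pose proof (conjugates_range _ _ Hu) as Ru. pose proof (conjugates_range _ _ Hu') as Ru'.
    assert (sqrt (u + 2) * sqrt (u + 2) = u + 2) by (apply sqrt_sqrt; lra).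
    assert (sqrt (u' + 2) * sqrt (u' + 2) = u' + 2) by (apply sqrt_sqrt; lra).
    assert (Hzu : z * z - 2 = u) by (simpl in Hz; destruct Hz as [<-|[<-|[]]]; lra).
    assert (Hwu : w * w - 2 = u') by (simpl in Hw; destruct Hw as [<-|[<-|[]]]; lra).
    rewrite E, Hzu in Hfz. rewrite E, Hwu.
    destruct (Req_dec (b u) 0) as [Hb|Hb].
    + rewrite Hb in Hfz.
      rewrite (IH a A u Hu ltac:(lra) u' Hu'), (IH b B u Hu Hb u' Hu'). ring.
    + exfalso.
      assert (Hbn : forall v, In v (conjugates n) -> b v <> 0).
      { intros v Hv Hbv. exact (Hb (IH b B v Hv Hbv u Hu)). }
      assert (Hnorm : forall v, In v (conjugates n) -> rel_norm a b v = 0).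
      { apply (IH _ (int_poly_rel_norm a b A B) u Hu).
        unfold rel_norm. replace (a u) with (- z * b u) by lra. rewrite <- Hzu. ring. }
      assert (HA : lprod (conjugates n) (fun v => a v * a v) =
                   lprod (conjugates n) (fun v => 2 + v) * lprod (conjugates n) (fun v => b v * b v)).
      { rewrite <- lprod_mul. apply lprod_ext. intros v Hv.
        specialize (Hnorm v Hv). unfold rel_norm in Hnorm. lra. }
      rewrite (proj2 (norm_two_minus_two_plus n)), !lprod_mul in HA.
      destruct (norm_int_poly n a A) as [NA HNA]. destruct (norm_int_poly n b B) as [NB HNB].
      rewrite HNA, HNB in HA.
      apply (lprod_neq0 _ _ Hbn). rewrite HNB.
      rewrite (Z_sqr_eq_twice_sqr NA NB); [reflexivity|].
      apply eq_IZR. rewrite !mult_IZR. simpl. lra.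
Qed.

Lemma cos_odd_in_conjugates n a : Nat.odd a = true ->
  In (2 * cos (2 * PI * INR a / 2 ^ S (S n))) (conjugates n).
Proof.
  revert a; induction n as [|n IH]; intros a Ha.
  - apply Nat.odd_spec in Ha. destruct Ha as [b ->]. left.
    rewrite cos_eq_0_1; [ring|]. exists (Z.of_nat b).
    rewrite <- INR_IZR_INZ, plus_INR, mult_INR. simpl. field.
  - set (t := 2 * PI * INR a / 2 ^ S (S (S n))).
    pose proof (IH a Ha) as H.
    replace (2 * PI * INR a / 2 ^ S (S n)) with (2 * t) in H
      by (unfold t; simpl; field; apply pow_nonzero; lra).
    rewrite cos_2a_cos in H.
    simpl conjugates. apply in_flat_map. exists (2 * (2 * cos t * cos t - 1)); split; [exact H|].
    replace (2 * (2 * cos t * cos t - 1) + 2) with ((2 * cos t) * (2 * cos t)) by ring.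
    destruct (Rle_dec 0 (cos t)).
    + left. rewrite sqrt_square; lra.
    + right; left. replace (2 * cos t * (2 * cos t)) with ((- (2 * cos t)) * (- (2 * cos t))) by ring.
      rewrite sqrt_square; lra.
Qed.

Lemma sin_PI_frac_eq_0 (p M : Z) : (0 < M)%Z -> sin (PI * IZR p / IZR M) = 0 -> (p mod M = 0)%Z.
Proof.
  intros HM Hs. apply sin_eq_0_0 in Hs. destruct Hs as [z Hz].
  assert (HM' : IZR M <> 0) by (apply not_0_IZR; lia).
  assert (p = z * M)%Z as ->.
  { apply eq_IZR. rewrite mult_IZR. apply (Rmult_eq_reg_l PI); [|exact PI_neq0].
    replace (PI * IZR p) with (PI * IZR p / IZR M * IZR M) by (field; exact HM').
    rewrite Hz. ring. }
  apply Z.mod_mul. lia.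
Qed.

Lemma cos_eq_mod (p q : nat) (M : Z) : (0 < M)%Z ->
  cos (2 * PI * INR p / IZR M) = cos (2 * PI * INR q / IZR M) ->
  ((Z.of_nat p - Z.of_nat q) mod M = 0 \/ (Z.of_nat p + Z.of_nat q) mod M = 0)%Z.
Proof.
  intros HM H. assert (HM' : IZR M <> 0) by (apply not_0_IZR; lia).
  pose proof (form2 (2 * PI * INR p / IZR M) (2 * PI * INR q / IZR M)) as F.
  rewrite H, Rminus_diag, !INR_IZR_INZ in F.
  replace ((2 * PI * IZR (Z.of_nat p) / IZR M - 2 * PI * IZR (Z.of_nat q) / IZR M) / 2)
    with (PI * IZR (Z.of_nat p - Z.of_nat q) / IZR M) in F
    by (rewrite minus_IZR; field; exact HM').
  replace ((2 * PI * IZR (Z.of_nat p) / IZR M + 2 * PI * IZR (Z.of_nat q) / IZR M) / 2)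
    with (PI * IZR (Z.of_nat p + Z.of_nat q) / IZR M) in F
    by (rewrite plus_IZR; field; exact HM').
  destruct (Rmult_integral _ _ (eq_sym F)) as [F'|F'];
    [apply Rmult_integral in F'; destruct F' as [F'|F']; [lra|] |].
  - left. exact (sin_PI_frac_eq_0 _ _ HM F').
  - right. exact (sin_PI_frac_eq_0 _ _ HM F').
Qed.

Lemma sumR_ext k f h : (forall i, (i < k)%nat -> f i = h i) -> sumR k f = sumR k h.
Proof. induction k as [|k IH]; simpl; intros H; auto. rewrite IH, H; auto. Qed.

Lemma sumR_even k h : (forall i, exists z, h i = IZR (2 * z)) -> exists z, sumR k h = IZR (2 * z).
Proof.
  intros H; induction k as [|k [a Ha]]; cbn [sumR].
  - exists 0%Z. reflexivity.
  - destruct (H k) as [b Hb]. exists (a + b)%Z.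
    rewrite Ha, Hb, !mult_IZR, plus_IZR. ring.
Qed.

Lemma prodR_ext k f h : (forall j, (j < k)%nat -> f j = h j) -> prodR k f = prodR k h.
Proof. induction k as [|k IH]; simpl; intros H; auto. rewrite IH, H; auto. Qed.

Lemma prodR_mul k f h : prodR k (fun j => f j * h j) = prodR k f * prodR k h.
Proof. induction k as [|k IH]; simpl; [ring | rewrite IH; ring]. Qed.

Lemma prodR_const k c : prodR k (fun _ => c) = c ^ k.
Proof. induction k as [|k IH]; simpl; [ring | rewrite IH; ring]. Qed.

Lemma prodR_nonneg k f : (forall j, (j < k)%nat -> 0 <= f j) -> 0 <= prodR k f.
Proof. induction k as [|k IH]; simpl; intros H; [lra | apply Rmult_le_pos; auto]. Qed.

Lemma prodR_sqrt k f : (forall j, (j < k)%nat -> 0 <= f j) ->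
  prodR k (fun j => sqrt (f j)) = sqrt (prodR k f).
Proof.
  induction k as [|k IH]; simpl; intros H.
  - symmetry; apply sqrt_1.
  - rewrite IH, sqrt_mult_alt by auto using prodR_nonneg. reflexivity.
Qed.

Lemma prodR_lprod k (h : nat -> R) f : prodR k (fun j => f (h j)) = lprod (map h (seq 0 k)) f.
Proof.
  induction k as [|k IH]; [reflexivity|].
  cbn [prodR]. rewrite seq_S, map_app, lprod_app, <- IH. simpl. ring.
Qed.

Lemma kk_succ_succ n : kk (S (S n)) = (2 ^ n)%nat.
Proof. unfold kk. f_equal. lia. Qed.

Section Embedding.

Variables (n g : nat).
Hypothesis hg : is_gen (S (S n)) g.

Definition tau_theta (j : nat) : R := tau_theta_i (S (S n)) g j 1.

Lemma tau_theta_in_conjugates j : In (tau_theta j) (conjugates n).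
Proof.
  unfold tau_theta, tau_theta_i. rewrite Nat.mul_1_l. apply cos_odd_in_conjugates.
  assert (Hg : Nat.odd g = true).
  { destruct hg as [Hodd _]. apply Z.odd_spec in Hodd. destruct Hodd as [b Hb].
    apply Nat.odd_spec. exists (Z.to_nat b). lia. }
  induction j as [|j IH]; simpl; auto. rewrite Nat.odd_mul, Hg, IH. reflexivity.
Qed.

Lemma tau_theta_range j : -2 < tau_theta j < 2.
Proof. exact (conjugates_range _ _ (tau_theta_in_conjugates j)). Qed.

(* The [tau^j theta] are pairwise distinct because [tau] generates the Galois group. *)
Lemma tau_theta_perm_conjugates : Permutation (map tau_theta (seq 0 (2 ^ n))) (conjugates n).
Proof.
  apply NoDup_Permutation_bis.
  - apply FinFun.Injective_map_NoDup_in; [|apply seq_NoDup].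
    intros i j Hi Hj E. apply in_seq in Hi, Hj.
    unfold tau_theta, tau_theta_i in E. rewrite !Nat.mul_1_l in E.
    assert (E' : cos (2 * PI * INR (g ^ i) / IZR (2 ^ Z.of_nat (S (S n))))
               = cos (2 * PI * INR (g ^ j) / IZR (2 ^ Z.of_nat (S (S n))))).
    { rewrite <- !pow_IZR. lra. }
    apply cos_eq_mod in E'; [|apply Z.pow_pos_nonneg; lia].
    rewrite !Nat2Z.inj_pow in E'.
    apply (proj2 hg); rewrite ?kk_succ_succ; [lia | lia | exact E'].
  - rewrite conjugates_length, length_map, length_seq. lia.
  - intros y Hy. apply in_map_iff in Hy. destruct Hy as (j & <- & _).
    apply tau_theta_in_conjugates.
Qed.

Lemma prodR_tau_theta f : prodR (2 ^ n) (fun j => f (tau_theta j)) = lprod (conjugates n) f.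
Proof. rewrite prodR_lprod. apply lprod_perm, tau_theta_perm_conjugates. Qed.

Lemma tau_beta_eq j : tau_beta (S (S n)) g j = (2 - tau_theta j) / 2 ^ S n.
Proof.
  unfold tau_beta, tau_theta. rewrite kk_succ_succ, pow_INR.
  replace (INR 2) with 2 by (simpl; ring).
  assert (2 ^ n <> 0) by (apply pow_nonzero; lra). simpl. field. assumption.
Qed.

Lemma tau_beta_pos j : 0 < tau_beta (S (S n)) g j.
Proof.
  rewrite tau_beta_eq. pose proof (tau_theta_range j).
  apply Rdiv_lt_0_compat; [lra | apply pow_lt; lra].
Qed.

Definition sqrt_norm_beta : R := sqrt (2 / 2 ^ (S n * 2 ^ n)).

Lemma norm_beta : prodR (2 ^ n) (tau_beta (S (S n)) g) = 2 / 2 ^ (S n * 2 ^ n).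
Proof.
  rewrite (prodR_ext _ _ (fun j => (2 - tau_theta j) * / 2 ^ S n))
    by (intros; apply tau_beta_eq).
  rewrite prodR_mul, prodR_const, (prodR_tau_theta (fun x => 2 - x)).
  rewrite (proj1 (norm_two_minus_two_plus n)), pow_inv, <- pow_mult. reflexivity.
Qed.

Lemma prodR_phi_beta (tauy : nat -> R) (f : R -> R) :
  (forall j, (j < 2 ^ n)%nat -> tauy j = f (tau_theta j)) ->
  Rabs (prodR (2 ^ n) (phi_beta (S (S n)) g tauy)) = sqrt_norm_beta * Rabs (lprod (conjugates n) f).
Proof.
  intros Ht. unfold phi_beta. rewrite prodR_mul, prodR_sqrt.
  2:{ intros; left; apply tau_beta_pos. }
  rewrite norm_beta, (prodR_ext _ _ (fun j => f (tau_theta j))), prodR_tau_theta by auto.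
  rewrite Rabs_mult, Rabs_pos_eq by apply sqrt_pos. reflexivity.
Qed.

End Embedding.

Section Lattice.

Variables (n g : nat).
Hypothesis hg : is_gen (S (S n)) g.
Variables (tauy : (nat -> Z) -> nat -> R) (poly : (nat -> Z) -> R -> R).
Hypothesis int_poly_poly : forall c, int_poly (poly c).
Hypothesis tauy_poly : forall c j, (j < 2 ^ n)%nat -> tauy c j = poly c (tau_theta n g j).

Definition lattice (v : nat -> R) : Prop :=
  exists c : nat -> Z, forall j, (j < kk (S (S n)))%nat -> v j = phi_beta (S (S n)) g (tauy c) j.

Lemma phi_beta_neq0 c j : (j < 2 ^ n)%nat ->
  phi_beta (S (S n)) g (tauy c) j <> 0 <-> poly c (tau_theta n g j) <> 0.
Proof.
  intros Hj. unfold phi_beta. rewrite tauy_poly by exact Hj.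
  pose proof (sqrt_lt_R0 _ (tau_beta_pos n g hg j)).
  split; intros H1 H2; apply H1.
  - rewrite H2; ring.
  - apply Rmult_integral in H2. destruct H2; [lra | assumption].
Qed.

Lemma lattice_max_diversity : max_diversity (kk (S (S n))) lattice.
Proof.
  intros v [c Hc] [i [Hi Hv]] j Hj. rewrite kk_succ_succ in *.
  rewrite Hc in Hv |- * by assumption. apply phi_beta_neq0 in Hv; [|assumption].
  apply phi_beta_neq0; [assumption|]. intros H0. apply Hv.
  apply (int_poly_vanish_conjugates n _ (int_poly_poly c) _ (tau_theta_in_conjugates n g hg j) H0).
  apply tau_theta_in_conjugates, hg.
Qed.

Lemma lattice_dpmin (B : R) :
  (forall c, lprod (conjugates n) (poly c) <> 0 -> B <= Rabs (lprod (conjugates n) (poly c))) ->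
  (exists c, poly c (tau_theta n g 0) <> 0 /\ Rabs (lprod (conjugates n) (poly c)) = B) ->
  dpmin_is (kk (S (S n))) lattice (sqrt_norm_beta n * B).
Proof.
  intros Hbound [c0 [Hc0 HB]]. rewrite kk_succ_succ. split.
  - intros r (v & [c Hc] & [i [Hi Hv]] & ->). rewrite kk_succ_succ in Hc.
    rewrite (prodR_ext _ _ (phi_beta (S (S n)) g (tauy c))) by exact Hc.
    rewrite (prodR_phi_beta n g hg _ (poly c)) by auto.
    apply Rmult_le_compat_l; [apply sqrt_pos | apply Hbound].
    apply lprod_neq0. intros w Hw H0.
    rewrite Hc in Hv by assumption. apply phi_beta_neq0 in Hv; [|assumption]. apply Hv.
    apply (int_poly_vanish_conjugates n _ (int_poly_poly c) w Hw H0), tau_theta_in_conjugates, hg.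
  - intros z Hz. rewrite <- HB, <- (prodR_phi_beta n g hg _ (poly c0)) by auto.
    apply Hz. exists (phi_beta (S (S n)) g (tauy c0)). repeat split.
    + exists c0. reflexivity.
    + exists 0%nat. split; [apply Nat.neq_0_lt_0, Nat.pow_nonzero; lia|].
      apply phi_beta_neq0; [apply Nat.neq_0_lt_0, Nat.pow_nonzero; lia | exact Hc0].
Qed.

End Lattice.

Definition OL_poly (k : nat) (c : nat -> Z) (x : R) : R :=
  sumR k (fun i => IZR (c i) * x ^ i).

Definition Lp_poly (k : nat) (c : nat -> Z) (x : R) : R :=
  IZR (c O) * (2 + x) + sumR k (fun i => if Nat.eqb i 0 then 0 else IZR (c i) * cheb i x).

Lemma int_poly_OL_poly k c : int_poly (OL_poly k c).
Proof.
  apply (int_poly_sum k (fun i x => IZR (c i) * x ^ i)). intros i.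
  apply int_poly_mul; [constructor | apply int_poly_pow].
Qed.

Lemma int_poly_Lp_poly k c : int_poly (Lp_poly k c).
Proof.
  apply int_poly_add.
  - apply int_poly_mul; [constructor|]. apply int_poly_add; constructor.
  - apply (int_poly_sum k (fun i x => if Nat.eqb i 0 then 0 else IZR (c i) * cheb i x)).
    intros i. destruct (Nat.eqb i 0).
    + exact (int_poly_const 0).
    + apply int_poly_mul; [constructor | apply int_poly_cheb].
Qed.

Lemma Lp_poly_even_at_0 k c : exists z, Lp_poly k c 0 = IZR (2 * z).
Proof.
  destruct (sumR_even k (fun i => if Nat.eqb i 0 then 0 else IZR (c i) * cheb i 0)) as [s Hs].
  { intros i. destruct (Nat.eqb i 0); [exists 0%Z; reflexivity|].
    destruct (cheb_even_at_0 i) as [w Hw]. exists (c i * w)%Z.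
    rewrite Hw, !mult_IZR. ring. }
  exists (c O + s)%Z. unfold Lp_poly. rewrite Hs, !mult_IZR, plus_IZR. ring.
Qed.

Lemma tau_Lp_eq n g c j :
  tau_Lp (S (S n)) g c j = Lp_poly (kk (S (S n))) c (tau_theta n g j).
Proof.
  unfold tau_Lp, Lp_poly. f_equal. apply sumR_ext. intros i _.
  destruct (Nat.eqb i 0); [reflexivity|]. f_equal.
  unfold tau_theta, tau_theta_i. rewrite cheb_cos, mult_INR, Nat.mul_1_l.
  f_equal. f_equal. unfold Rdiv. ring.
Qed.

Definition delta0 (i : nat) : Z := if Nat.eqb i 0 then 1%Z else 0%Z.

Lemma OL_poly_delta0 k x : (0 < k)%nat -> OL_poly k delta0 x = 1.
Proof.
  intros Hk. destruct k as [|k]; [lia|]. clear Hk. unfold OL_poly, delta0.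
  induction k as [|k IH]; [simpl; ring|]. cbn [sumR] in *. rewrite IH. simpl. ring.
Qed.

Lemma Lp_poly_delta0 k x : Lp_poly k delta0 x = 2 + x.
Proof.
  unfold Lp_poly, delta0. replace (sumR k _) with 0; [simpl; ring|].
  induction k as [|k IH]; simpl; [reflexivity|]. rewrite <- IH.
  destruct (Nat.eqb k 0); ring.
Qed.

Lemma lattice_OL_max_diversity n g :
  is_gen (S (S n)) g -> max_diversity (kk (S (S n))) (lattice_OL (S (S n)) g).
Proof.
  intros hg. apply (lattice_max_diversity n g hg _ (OL_poly (kk (S (S n))))).
  - apply int_poly_OL_poly.
  - reflexivity.
Qed.

Lemma lattice_Lp_max_diversity n g :
  is_gen (S (S n)) g -> max_diversity (kk (S (S n))) (lattice_Lp (S (S n)) g).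
Proof.
  intros hg. apply (lattice_max_diversity n g hg _ (Lp_poly (kk (S (S n))))).
  - apply int_poly_Lp_poly.
  - intros; apply tau_Lp_eq.
Qed.

Lemma lattice_OL_dpmin n g :
  is_gen (S (S n)) g -> dpmin_is (kk (S (S n))) (lattice_OL (S (S n)) g) (sqrt_norm_beta n).
Proof.
  intros hg. rewrite <- (Rmult_1_r (sqrt_norm_beta n)).
  apply (lattice_dpmin n g hg _ (OL_poly (kk (S (S n))))).
  - apply int_poly_OL_poly.
  - reflexivity.
  - intros c Hc. destruct (norm_int_poly n _ (int_poly_OL_poly (kk (S (S n))) c)) as [N HN].
    rewrite HN in *. rewrite <- abs_IZR. apply IZR_le.
    assert (N <> 0%Z) by (intros ->; exact (Hc eq_refl)). lia.
  - exists delta0. rewrite kk_succ_succ, !OL_poly_delta0 by (apply Nat.neq_0_lt_0, Nat.pow_nonzero; lia).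
    split; [lra|].
    rewrite (lprod_ext _ _ (fun _ => 1)) by (intros; apply OL_poly_delta0, Nat.neq_0_lt_0, Nat.pow_nonzero; lia).
    replace (lprod (conjugates n) (fun _ => 1)) with 1.
    + apply Rabs_R1.
    + induction (conjugates n) as [|w l IH]; simpl; [reflexivity | rewrite <- IH; ring].
Qed.

Lemma lattice_Lp_dpmin n g :
  is_gen (S (S n)) g -> dpmin_is (kk (S (S n))) (lattice_Lp (S (S n)) g) (2 * sqrt_norm_beta n).
Proof.
  intros hg. rewrite Rmult_comm.
  apply (lattice_dpmin n g hg _ (Lp_poly (kk (S (S n))))).
  - apply int_poly_Lp_poly.
  - intros; apply tau_Lp_eq.
  - intros c Hc. destruct (Lp_poly_even_at_0 (kk (S (S n))) c) as [z Hz].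
    destruct (norm_int_poly_even n _ z (int_poly_Lp_poly _ c) Hz) as [N HN].
    rewrite HN in *. rewrite <- abs_IZR. replace 2 with (IZR 2) by reflexivity. apply IZR_le.
    assert (N <> 0%Z) by (intros ->; exact (Hc eq_refl)). lia.
  - exists delta0. rewrite Lp_poly_delta0. pose proof (tau_theta_range n g hg 0). split; [lra|].
    rewrite (lprod_ext _ _ (fun x => 2 + x)) by (intros; apply Lp_poly_delta0).
    rewrite (proj2 (norm_two_minus_two_plus n)). apply Rabs_pos_eq. lra.
Qed.

Lemma Rpower_exponent_OL n :
  Rpower 2 ((1 - (INR (S (S n)) - 1) * INR (kk (S (S n)))) / 2) = sqrt_norm_beta n.
Proof.
  unfold sqrt_norm_beta. rewrite kk_succ_succ.
  replace ((1 - (INR (S (S n)) - 1) * INR (2 ^ n)) / 2)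
    with ((1 + - INR (S n * 2 ^ n)) * / 2) by (rewrite mult_INR, !S_INR; field).
  rewrite <- Rpower_mult, Rpower_sqrt by (unfold Rpower; apply exp_pos).
  rewrite Rpower_plus, Rpower_Ropp, Rpower_1, Rpower_pow by lra. reflexivity.
Qed.

Lemma Rpower_exponent_Lp n :
  Rpower 2 ((3 - (INR (S (S n)) - 1) * INR (kk (S (S n)))) / 2) = 2 * sqrt_norm_beta n.
Proof.
  rewrite <- Rpower_exponent_OL. set (u := (INR (S (S n)) - 1) * INR (kk (S (S n)))).
  replace ((3 - u) / 2) with (1 + (1 - u) / 2) by field.
  rewrite Rpower_plus, Rpower_1 by lra. reflexivity.
Qed.

Theorem mainTheorem12 (m g : nat) (hm : (3 <= m)%nat) (hg : is_gen m g) :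
  max_diversity (kk m) (lattice_OL m g) /\
  max_diversity (kk m) (lattice_Lp m g) /\
  dpmin_is (kk m) (lattice_OL m g)
    (Rpower 2 ((1 - (INR m - 1) * INR (kk m)) / 2)) /\
  dpmin_is (kk m) (lattice_Lp m g)
    (Rpower 2 ((3 - (INR m - 1) * INR (kk m)) / 2)).
Proof.
  destruct m as [|[|n]]; [lia | lia |].
  rewrite Rpower_exponent_OL, Rpower_exponent_Lp.
  repeat split.
  - apply lattice_OL_max_diversity, hg.
  - apply lattice_Lp_max_diversity, hg.
  - apply lattice_OL_dpmin, hg.
  - apply lattice_OL_dpmin, hg.
  - apply lattice_Lp_dpmin, hg.
  - apply lattice_Lp_dpmin, hg.
Qed.
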